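(* The semigroup $\mathbb NA$ is scored if and only if $\mathbb C[S_1]$ is a simple $\mathbb Z^d$-graded $D(R_A)$-module (it has no nonzero proper $\mathbb Z^d$-graded $D(R_A)$-submodules).
   Context: $A\subset\mathbb Z^d$ is a finite set generating the group $\mathbb Z^d$; $R_A=\mathbb C[\mathbb NA]\subseteq\mathbb C[t_1^{\pm1},\dots,t_d^{\pm1}]$; $D(R_A)=\{P\in\mathbb C[t^{\pm1}]\langle\partial_1,\dots,\partial_d\rangle:P(R_A)\subseteq R_A\}$, which acts on Laurent polynomials. For a facet $\sigma$ of $\mathbb R_{\ge0}A$, $F_\sigma$ is the unique linear form with $F_\sigma(\mathbb R_{\ge0}A)\ge0$, $F_\sigma(\sigma)=0$, $F_\sigma(\mathbb Z^d)=\mathbb Z$. $S_1=\bigcap_{\sigma\text{ facet}}\{\mathbf a\in\mathbb Z^d:F_\sigma(\mathbf a)\in F_\sigma(\mathbb NA)\}$ (equivalently the set of $\mathbf a$ with $E_\sigma(\mathbf a)\neq\emptyset$ for all facets, where $E_\sigma(\mathbf a)=\{\boldsymbol\lambda\in\mathbb C(A\cap\sigma)/\mathbb Z(A\cap\sigma):\mathbf a-\boldsymbol\lambda\in\mathbb NA+\mathbb Z(A\cap\sigma)\}$), and $\mathbb C[S_1]=\bigoplus_{\mathbf a\in S_1}\mathbb Ct^{\mathbf a}$, a $\mathbb Z^d$-graded $D(R_A)$-submodule of $\mathbb C[t^{\pm1}]$. $\mathbb NA$ is scored if $\mathbb NA=S_1$. *)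

From HB Require Import structures.
From mathcomp Require Import all_boot all_order all_algebra.
From mathcomp Require Import reals complex.

Set Implicit Arguments.
Unset Strict Implicit.
Unset Printing Implicit Defensive.

Import Order.TTheory GRing.Theory Num.Theory.
Local Open Scope ring_scope.

Section AffineSemigroup.
Variables (R : realType) (d : nat).

Notation zvec := 'rV[int]_d.

Definition zlin (F v : zvec) : int := \sum_(i < d) F 0 i * v 0 i.

Definition rlin (l x : 'rV[R]_d) : R := \sum_(i < d) l 0 i * x 0 i.

Definition toR (v : zvec) : 'rV[R]_d := map_mx (fun z : int => z%:~R) v.

Definition inNA (A : seq zvec) (v : zvec) : Prop :=
  exists c : zvec -> nat, v = \sum_(a <- A) (c a)%:Z *: a.

Definition generates_Zd (A : seq zvec) : Prop :=
  forall v : zvec, exists c : zvec -> int, v = \sum_(a <- A) c a *: a.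

Definition cone (A : seq zvec) (x : 'rV[R]_d) : Prop :=
  exists l : zvec -> R, (forall a, 0 <= l a) /\ x = \sum_(a <- A) l a *: toR a.

Definition dim_ge (S : 'rV[R]_d -> Prop) (k : nat) : Prop :=
  exists M : 'M[R]_(k, d), row_free M /\ forall i, S (row i M).

Definition is_face (A : seq zvec) (s : 'rV[R]_d -> Prop) : Prop :=
  exists l : 'rV[R]_d, (forall x, cone A x -> 0 <= rlin l x) /\
    forall x, s x <-> (cone A x /\ rlin l x = 0).

Definition is_facet (A : seq zvec) (s : 'rV[R]_d -> Prop) : Prop :=
  is_face A s /\ exists k, k.+1 = d /\ dim_ge s k /\ ~ dim_ge s k.+1.

(* F is the (unique) primitive integral support form F_s of the facet s *)
Definition is_facet_form (A : seq zvec) (s : 'rV[R]_d -> Prop) (F : zvec) : Prop :=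
  (forall x, cone A x -> 0 <= rlin (toR F) x) /\
  (forall x, s x -> rlin (toR F) x = 0) /\
  (exists v, zlin F v = 1).

Definition inS1 (A : seq zvec) (a : zvec) : Prop :=
  forall s, is_facet A s -> forall F, is_facet_form A s F ->
    exists b, inNA A b /\ zlin F a = zlin F b.

Definition scored (A : seq zvec) : Prop := forall v, inNA A v <-> inS1 A v.

(* Laurent polynomials in C[t^{+-1}]: finitely supported coefficient maps *)
Definition laurent (f : zvec -> R[i]) : Prop :=
  exists s : seq zvec, forall a, a \notin s -> f a = 0.

Definition supported_in (S : zvec -> Prop) (f : zvec -> R[i]) : Prop :=
  forall a, f a != 0 -> S a.

(* differential operators in C[t^{+-1}]<d_1..d_d>, written as finite sums of
   terms  c * t^b * d^alpha  *)
Definition dop := seq (R[i] * zvec * {ffun 'I_d -> nat}).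

Definition alvec (al : {ffun 'I_d -> nat}) : zvec := \row_i (al i)%:Z.

(* d^alpha t^a = ffact a alpha * t^(a - alpha) *)
Definition ffact (a : zvec) (al : {ffun 'I_d -> nat}) : R[i] :=
  \prod_(i < d) \prod_(j < al i) ((a 0 i)%:~R - j%:R).

Definition dact (P : dop) (f : zvec -> R[i]) : zvec -> R[i] :=
  fun c => \sum_(t <- P)
    t.1.1 * ffact (c - t.1.2 + alvec t.2) t.2 * f (c - t.1.2 + alvec t.2).

Definition inDRA (A : seq zvec) (P : dop) : Prop :=
  forall f, laurent f -> supported_in (inNA A) f ->
    laurent (dact P f) /\ supported_in (inNA A) (dact P f).

Definition graded_submodule (A : seq zvec) (S : zvec -> Prop)
    (N : (zvec -> R[i]) -> Prop) : Prop :=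
  (forall f, N f -> laurent f /\ supported_in S f) /\
  [/\ N (fun _ => 0),
      forall f g, N f -> N g -> N (fun c => f c + g c),
      forall (k : R[i]) f, N f -> N (fun c => k * f c),
      forall P, inDRA A P -> forall f, N f -> N (dact P f)
    & forall f, N f -> forall a, N (fun c => if c == a then f a else 0)].

Definition C_S1_graded_simple (A : seq zvec) : Prop :=
  forall N, graded_submodule A (inS1 A) N ->
    (forall f, N f -> f = (fun _ => 0)) \/
    (forall f, laurent f -> supported_in (inS1 A) f -> N f).

End AffineSemigroup.

From HB Require Import structures.
From mathcomp Require Import all_boot all_order all_algebra.
From mathcomp Require Import reals complex.
From mathcomp Require Import zify ring.
From Stdlib Require Import Classical FunctionalExtensionality.

(* If NA = S_1, let N be a nonzero graded submodule and f in N with f(a) <> 0.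
   Each facet form F maps NA onto a cofinite subset of the naturals, and there are
   finitely many facet forms, since a facet form is determined by the generators
   it vanishes on.  Hence there is a polynomial q in the exponent with q(a) <> 0
   and q(c) = 0 whenever c is in NA but c - a is not in NA = S_1; the operator
   t^(-a) q(theta) then lies in D(R_A) and maps the degree-a part of f to a
   nonzero constant, and multiplying by the t^b (b in NA) yields all of
   C[NA] = C[S_1].  Conversely, C[NA] is always a nonzero graded submodule of
   C[S_1], so simplicity forces NA = S_1. *)

Set Implicit Arguments.
Unset Strict Implicit.
Unset Printing Implicit Defensive.

Import Order.TTheory GRing.Theory Num.Theory.
Local Open Scope ring_scope.

Section LinearForms.
Variables (R : realType) (d : nat).
Local Notation zvec := 'rV[int]_d.

Lemma zlin_is_scalar (F : zvec) : scalar (zlin F).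
Proof.
move=> k u v; rewrite /zlin mulr_sumr -big_split.
by apply: eq_bigr => i _; rewrite !mxE mulrDr mulrCA.
Qed.
HB.instance Definition _ (F : zvec) :=
  GRing.isLinear.Build int zvec int *%R (zlin F) (zlin_is_scalar F).

Lemma rlin_is_scalar (l : 'rV[R]_d) : scalar (rlin l).
Proof.
move=> k u v; rewrite /rlin mulr_sumr -big_split.
by apply: eq_bigr => i _; rewrite !mxE mulrDr mulrCA.
Qed.
HB.instance Definition _ (l : 'rV[R]_d) :=
  GRing.isLinear.Build R 'rV[R]_d R *%R (rlin l) (rlin_is_scalar l).

Lemma rlinZl k (l x : 'rV[R]_d) : rlin (k *: l) x = k * rlin l x.
Proof. by rewrite /rlin mulr_sumr; apply: eq_bigr => i _; rewrite mxE mulrA. Qed.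

Lemma rlin_toR (F v : zvec) : rlin (toR R F) (toR R v) = (zlin F v)%:~R.
Proof. by rewrite /rlin /zlin rmorph_sum; apply: eq_bigr => i _; rewrite !mxE rmorphM. Qed.

Lemma rlin_sum_toR (l : 'rV[R]_d) (s : seq zvec) (g : zvec -> R) :
  rlin l (\sum_(a <- s) g a *: toR R a) = \sum_(a <- s) g a * rlin l (toR R a).
Proof. by rewrite linear_sum /=; apply: eq_bigr => a _; rewrite scalarZ. Qed.

Lemma zlin_delta (F : zvec) (j : 'I_d) : zlin F (delta_mx 0 j) = F 0 j.
Proof.
rewrite /zlin (bigD1 j) //= big1 ?addr0 => [|i /negPf ij]; rewrite mxE eqxx /=.
  by rewrite eqxx mulr1.
by rewrite ij mulr0.
Qed.

Lemma zlinNl (F v : zvec) : zlin (- F) v = - zlin F v.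
Proof. by rewrite /zlin -sumrN; apply: eq_bigr => i _; rewrite mxE mulNr. Qed.

End LinearForms.

Section Semigroup.
Variables (d : nat) (A : seq 'rV[int]_d).
Local Notation zvec := 'rV[int]_d.

Lemma inNA0 : inNA A 0.
Proof. by exists (fun _ => 0%N); rewrite big1 // => a _; rewrite scale0r. Qed.

Lemma inNAD u v : inNA A u -> inNA A v -> inNA A (u + v).
Proof.
move=> [c ->] [c' ->]; exists (fun a => (c a + c' a)%N).
by rewrite -big_split; apply: eq_bigr => a _; rewrite PoszD scalerDl.
Qed.

Lemma inNAMn n u : inNA A u -> inNA A (u *+ n).
Proof.
move=> Au; elim: n => [|n IHn]; first by rewrite mulr0n; apply: inNA0.
by rewrite mulrS; apply: inNAD.
Qed.

Lemma zlin_NA_ge0 (F : zvec) b :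
  (forall a, a \in A -> 0 <= zlin F a) -> inNA A b -> 0 <= zlin F b.
Proof.
move=> F_ge0 [c ->]; rewrite linear_sum /= big_seq sumr_ge0 // => a Aa.
by rewrite scalarZ mulr_ge0 ?F_ge0.
Qed.

Hypothesis genA : generates_Zd A.

Lemma NA_sub_decomp v : exists b1 b2, [/\ inNA A b1, inNA A b2 & v = b1 - b2].
Proof.
have [c ->] := genA v.
pose pos a := if 0 <= c a then `|c a|%N else 0%N.
pose neg a := if 0 <= c a then 0%N else `|c a|%N.
exists (\sum_(a <- A) (pos a)%:Z *: a), (\sum_(a <- A) (neg a)%:Z *: a).
split; [by exists pos | by exists neg |].
rewrite -sumrB; apply: eq_bigr => a _; rewrite -scalerBl /pos /neg.
case: ifP => c_ge0; first by rewrite subr0 gez0_abs.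
by rewrite sub0r ltz0_abs ?opprK // ltNge c_ge0.
Qed.

Lemma zlin_gen_eq0 (F : zvec) :
  (forall a, a \in A -> zlin F a = 0) -> forall v, zlin F v = 0.
Proof.
move=> FA0 v; have [c ->] := genA v.
by rewrite linear_sum /= big_seq big1 // => a Aa; rewrite scalarZ /= FA0 ?mulr0.
Qed.

End Semigroup.

Lemma frobenius_consecutive (Q n : nat) :
  (Q * Q <= n)%N -> exists x y, n = (x * Q + y * Q.+1)%N.
Proof.
case: (posnP Q) => [->|Q_gt0] le_n; first by exists 0%N, n; rewrite muln1.
exists (n %/ Q - n %% Q)%N, (n %% Q)%N.
have := divn_eq n Q; have := ltn_pmod n Q_gt0; have : (Q <= n %/ Q)%N by rewrite leq_divRL.
nia.
Qed.

Lemma injective_key_finite (T : eqType) (K : finType) (P : T -> Prop) (key : T -> K) :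
  (forall x y, P x -> P y -> key x = key y -> x = y) ->
  exists L : seq T, forall x, P x <-> x \in L.
Proof.
move=> key_inj.
suff [L PL] : exists L : seq T, forall x, P x /\ key x \in index_enum K <-> x \in L.
  by exists L => x; split=> [Px|/PL[] //]; apply/PL; rewrite mem_index_enum.
elim: (index_enum K) => [|k ks [L PL]]; first by exists [::] => x; split=> [[]|].
have [[x [Px kx]]|Nk] := classic (exists x, P x /\ key x = k).
  exists (x :: L) => y; rewrite !in_cons; split.
    case=> Py /orP[/eqP ky|kys]; first by rewrite (key_inj y x) ?eqxx // ky.
    by apply/orP; right; apply/PL.
  case/orP=> [/eqP->|/PL[Py kys]]; first by rewrite kx eqxx.
  by rewrite kys orbT.
exists L => y; rewrite in_cons; split.
  by case=> Py /orP[/eqP ky|kys]; [case: Nk; exists y | apply/PL].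
by case/PL=> Py kys; rewrite kys orbT.
Qed.

Section FacetForms.
Variables (R : realType) (d : nat) (A : seq 'rV[int]_d).
Local Notation zvec := 'rV[int]_d.
Implicit Types (s : 'rV[R]_d -> Prop) (F : zvec).

Lemma cone_toR a : a \in A -> cone A (toR R a).
Proof.
move=> Aa; set n := count_mem a A.
have n_gt0 : (0 < n)%N by rewrite -has_count; apply/hasP; exists a => /=.
exists (fun b => (b == a)%:R / n%:R); split=> [b|]; first by rewrite divr_ge0 ?ler0n.
rewrite (eq_bigr (fun b => if b == a then n%:R^-1 *: toR R a else 0)); last first.
  by move=> b _; case: eqP => [->|_]; rewrite ?mul1r ?mul0r ?scale0r.
rewrite -big_mkcond big_const_seq iter_addr_0 -[count _ A]/n scalerMnl -mulr_natr.
by rewrite mulVf ?scale1r // pnatr_eq0 -lt0n.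
Qed.

Lemma facet_form_ge0 s F : is_facet_form A s F -> forall a, a \in A -> 0 <= zlin F a.
Proof. by move=> [F_ge0 _] a Aa; rewrite -(ler0z R) -rlin_toR; apply/F_ge0/cone_toR. Qed.

Lemma face_zlin_eq0 F F' x :
  (forall a, a \in A -> 0 <= zlin F a) ->
  (forall a, a \in A -> zlin F a = 0 -> zlin F' a = 0) ->
  cone A x -> rlin (toR R F) x = 0 -> rlin (toR R F') x = 0.
Proof.
move=> F_ge0 FF' [lam [lam_ge0 ->]]; rewrite !rlin_sum_toR big_seq => /eqP.
rewrite psumr_eq0 => [/allP lamF0|a Aa]; last by rewrite rlin_toR mulr_ge0 ?ler0z ?F_ge0.
rewrite big_seq big1 // => a Aa; move: (implyP (lamF0 a Aa) Aa).
rewrite !rlin_toR mulf_eq0 intr_eq0 => /orP[/eqP->|/eqP/FF'->//]; first by rewrite mul0r.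
by rewrite mulr0.
Qed.

Lemma annihilator_collinear (k : nat) (M : 'M[R]_(k, d)) (u u' : 'rV[R]_d) :
  k.+1 = d -> row_free M -> u != 0 ->
  (forall i, rlin u (row i M) = 0) -> (forall i, rlin u' (row i M) = 0) ->
  exists kap, u' = kap *: u.
Proof.
move=> kd Mfree u_neq0.
have sub_ker w : (forall i, rlin w (row i M) = 0) -> (w <= kermx M^T)%MS.
  move=> wM; apply/sub_kermxP/rowP => j; rewrite !mxE -[RHS](wM j).
  by apply: eq_bigr => i _; rewrite !mxE.
move=> /sub_ker uK /sub_ker u'K.
have rk_ker : \rank (kermx M^T) = 1%N.
  by rewrite mxrank_ker mxrank_tr (eqP Mfree) -kd subSnn.
have Ku : (kermx M^T <= u)%MS.
  by rewrite -(mxrank_leqif_sup uK).2 rank_rV u_neq0 rk_ker.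
by apply/sub_rVP; apply: submx_trans u'K Ku.
Qed.

Lemma primitive_collinear F F' (kap : R) :
  toR R F' = kap *: toR R F -> (exists v, zlin F v = 1) -> (exists v', zlin F' v' = 1) ->
  F' = F \/ F' = - F.
Proof.
move=> EF [v Fv] [v' F'v'].
have F'E w : zlin F' w = zlin F' v * zlin F w.
  apply: (@intr_inj R); rewrite intrM -!rlin_toR EF !rlinZl.
  by rewrite [rlin _ (toR R v)]rlin_toR Fv mulr1.
have : zlin F' v \is a intUnitRing.unitz.
  by apply: (@intUnitRing.unitzPl _ (zlin F v')); rewrite mulrC -F'E.
rewrite qualifE => /orP[] /eqP F'v; [left|right]; apply/rowP => j.
  by rewrite -[LHS]zlin_delta F'E F'v mul1r zlin_delta.
by rewrite -[LHS]zlin_delta F'E F'v mulN1r zlin_delta mxE.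
Qed.

Hypothesis genA : generates_Zd A.

(* F' vanishes on the facet, which spans a hyperplane, so F' is a real multiple of
   F; primitivity leaves F' = F or F' = -F, and the latter would kill A. *)
Lemma facet_form_unique s s' F F' :
  is_facet A s -> is_facet_form A s F -> is_facet_form A s' F' ->
  (forall a, a \in A -> (zlin F a == 0) = (zlin F' a == 0)) -> F = F'.
Proof.
move=> [[l [_ sE]] [k [kd [[M [Mfree Ms]] _]]]] sF s'F' FF'0.
have F_ge0 := facet_form_ge0 sF; have F'_ge0 := facet_form_ge0 s'F'.
have [_ [Fs [v Fv]]] := sF; have [_ [_ F'prim]] := s'F'.
have F'M i : rlin (toR R F') (row i M) = 0.
  have [coneM _] := (sE _).1 (Ms i).
  apply: (face_zlin_eq0 F_ge0) => // [a Aa /eqP|]; last exact/Fs/Ms.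
  by rewrite FF'0 // => /eqP.
have F_neq0 : toR R F != 0.
  have : rlin (toR R F) (toR R v) != 0 by rewrite rlin_toR Fv oner_neq0.
  by apply: contraNneq => ->; rewrite /rlin big1 // => i _; rewrite mxE mul0r.
have [kap EF'] := annihilator_collinear kd Mfree F_neq0 (fun i => Fs _ (Ms i)) F'M.
case: (primitive_collinear EF' (ex_intro _ v Fv) F'prim) => // F'N.
have FA0 a : a \in A -> zlin F a = 0.
  move=> Aa; apply/eqP; rewrite eq_le F_ge0 // andbT -oppr_ge0 -zlinNl -F'N.
  exact: F'_ge0.
by move: Fv; rewrite (zlin_gen_eq0 genA FA0).
Qed.

Lemma facet_forms_finite : exists L : seq zvec,
  forall F, (exists2 s : 'rV[R]_d -> Prop, is_facet A s & is_facet_form A s F) <-> F \in L.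
Proof.
pose key F := [ffun i : 'I_(size A) => zlin F (nth 0 A i) == 0].
apply: (@injective_key_finite _ _ _ key) => F F' [s sA sF] [s' _ s'F'] kFF'.
apply: facet_form_unique sA sF s'F' _ => a Aa.
have ia : (index a A < size A)%N by rewrite index_mem.
move: (congr1 (fun f : {ffun 'I_(size A) -> bool} => f (Ordinal ia)) kFF').
by rewrite /key !ffunE /= nth_index.
Qed.

Lemma zlin_NA_cofinite F :
  (forall a, a \in A -> 0 <= zlin F a) -> (exists v, zlin F v = 1) ->
  exists N0 : nat, forall n : nat, (N0 <= n)%N -> exists2 b, inNA A b & zlin F b = n%:Z.
Proof.
move=> F_ge0 [v Fv]; have [b1 [b2 [NAb1 NAb2 v_eq]]] := NA_sub_decomp genA v.
set Q := `|zlin F b2|%N.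
have FQ : zlin F b2 = Q by rewrite gez0_abs // (zlin_NA_ge0 F_ge0 NAb2).
have FQ1 : zlin F b1 = Q.+1 by move: Fv; rewrite v_eq raddfB /= FQ; lia.
exists (Q * Q)%N => n /frobenius_consecutive [x [y ->]].
exists (b2 *+ x + b1 *+ y); first by apply: inNAD; apply: inNAMn.
by rewrite raddfD /= !raddfMn /= FQ FQ1; lia.
Qed.

End FacetForms.

Section DifferentialOperators.
Variables (R : realType) (d : nat).
Local Notation zvec := 'rV[int]_d.
Local Notation C := R[i].
Local Notation ffterm := (C * {ffun 'I_d -> nat})%type.
Implicit Types (c e : zvec) (q : zvec -> C) (ls : seq ffterm).

Definition ffpoly ls c : C := \sum_(t <- ls) t.1 * ffact R c t.2.

Definition polyfun q := exists ls, forall c, q c = ffpoly ls c.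

Lemma ffact0 c : ffact R c [ffun => 0%N] = 1.
Proof. by rewrite /ffact big1 // => i _; rewrite ffunE big_ord0. Qed.

Lemma ffact_incr c (al : {ffun 'I_d -> nat}) (i : 'I_d) :
  ffact R c [ffun j => (al j + (j == i))%N] = ffact R c al * ((c 0 i)%:~R - (al i)%:R).
Proof.
rewrite /ffact (bigD1 i) //= [in RHS](bigD1 i) //= ffunE eqxx addn1 big_ord_recr /=.
rewrite -!mulrA; congr (_ * _); rewrite mulrC; congr (_ * _).
by apply: eq_bigr => j /negPf ji; rewrite ffunE ji addn0.
Qed.

Lemma polyfun_ext q q' : q =1 q' -> polyfun q -> polyfun q'.
Proof. by move=> qq' [ls qE]; exists ls => c; rewrite -qq'. Qed.

Lemma polyfun_const k : polyfun (fun=> k).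
Proof.
exists [:: (k, [ffun => 0%N])] => c.
by rewrite /ffpoly big_cons big_nil /= ffact0 mulr1 addr0.
Qed.

Lemma polyfun_add q q' : polyfun q -> polyfun q' -> polyfun (fun c => q c + q' c).
Proof. by move=> [ls qE] [ls' q'E]; exists (ls ++ ls') => c; rewrite /ffpoly big_cat qE q'E. Qed.

Lemma polyfun_scale k q : polyfun q -> polyfun (fun c => k * q c).
Proof.
move=> [ls qE]; exists [seq (k * t.1, t.2) | t : ffterm <- ls] => c.
by rewrite /ffpoly big_map qE mulr_sumr; apply: eq_bigr => t _; rewrite mulrA.
Qed.

Lemma polyfun_sum (I : Type) (r : seq I) (g : I -> zvec -> C) :
  (forall i, polyfun (g i)) -> polyfun (fun c => \sum_(i <- r) g i c).
Proof.
move=> g_poly; elim: r => [|i r IHr].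
  by apply: polyfun_ext (polyfun_const 0) => c; rewrite big_nil.
by apply: polyfun_ext (polyfun_add (g_poly i) IHr) => c; rewrite big_cons.
Qed.

(* [c_i c^(al) = c^(al + e_i) + al_i c^(al)] *)
Lemma polyfun_mul_coord q (i : 'I_d) : polyfun q -> polyfun (fun c => q c * (c 0 i)%:~R).
Proof.
move=> [ls qE].
exists ([seq (t.1, [ffun j => (t.2 j + (j == i))%N]) | t : ffterm <- ls] ++
        [seq (t.1 * (t.2 i)%:R, t.2) | t : ffterm <- ls]) => c.
rewrite /ffpoly big_cat /= !big_map qE mulr_suml -big_split; apply: eq_bigr => t _ /=.
by rewrite ffact_incr; ring.
Qed.

Lemma polyfun_mul_zlin_sub q (F : zvec) (k : nat) :
  polyfun q -> polyfun (fun c => q c * ((zlin F c)%:~R - k%:R)).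
Proof.
move=> q_poly.
have : polyfun (fun c => \sum_(i < d) (F 0 i)%:~R * (q c * (c 0 i)%:~R) + - k%:R * q c).
  apply: polyfun_add; last exact: polyfun_scale.
  by apply: polyfun_sum => i; apply/polyfun_scale/polyfun_mul_coord.
apply: polyfun_ext => c; rewrite /zlin rmorph_sum mulrBr mulr_sumr mulNr mulrC.
by congr (_ - _); apply: eq_bigr => i _; rewrite rmorphM; ring.
Qed.

Lemma polyfun_mul_prod q (F : zvec) (ks : seq nat) :
  polyfun q -> polyfun (fun c => q c * \prod_(k <- ks) ((zlin F c)%:~R - k%:R)).
Proof.
elim: ks q => [|k ks IHks] q q_poly.
  by apply: polyfun_ext q_poly => c; rewrite big_nil mulr1.
apply: polyfun_ext (IHks _ (polyfun_mul_zlin_sub F k q_poly)) => c.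
by rewrite big_cons mulrA.
Qed.

(* The term [(k, al)] of [ls] becomes the operator [k t^(e + al) d^al], which maps
   [t^c] to [k c^(al) t^(c + e)]. *)
Definition shift_op ls e : dop R d := [seq (t.1, alvec t.2 + e, t.2) | t : ffterm <- ls].

Lemma dact_shift_op ls e f c : dact (shift_op ls e) f c = ffpoly ls (c - e) * f (c - e).
Proof.
rewrite /dact /shift_op big_map /ffpoly mulr_suml; apply: eq_bigr => t _ /=.
by rewrite opprD addrA addrAC subrK.
Qed.

Lemma shift_op_DRA (A : seq zvec) ls e :
  (forall c, inNA A c -> ~ inNA A (c + e) -> ffpoly ls c = 0) -> inDRA A (shift_op ls e).
Proof.
move=> ls_gap f [s sf] f_NA; split.
  exists [seq x + e | x <- s] => c cNs; rewrite dact_shift_op sf ?mulr0 //.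
  by apply: contra cNs => cs; apply/mapP; exists (c - e); rewrite ?subrK.
move=> c; rewrite dact_shift_op mulf_eq0 negb_or => /andP[ls_neq0 /f_NA NAce].
by apply: NNPP => NAc; move/eqP: ls_neq0; apply; apply: ls_gap; rewrite ?subrK.
Qed.

End DifferentialOperators.

Definition in_form_image d (A : seq 'rV[int]_d) (F v : 'rV[int]_d) : Prop :=
  exists b, inNA A b /\ zlin F v = zlin F b.

Section Separation.
Variables (R : realType) (d : nat) (A : seq 'rV[int]_d).
Hypothesis genA : generates_Zd A.
Local Notation zvec := 'rV[int]_d.
Local Notation C := R[i].

(* [F(NA)] contains 0 and every integer [>= N0], so [F (c - a)] can miss it only
   if [F c] is one of the [k < N0 + F a] other than [F a]. *)
Lemma gap_factor (F a : zvec) :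
  (forall b, b \in A -> 0 <= zlin F b) -> (exists v, zlin F v = 1) -> inNA A a ->
  exists ks : seq nat,
    \prod_(k <- ks) ((zlin F a)%:~R - k%:R) != 0 :> C /\
    forall c, inNA A c -> ~ in_form_image A F (c - a) ->
      \prod_(k <- ks) ((zlin F c)%:~R - k%:R) = 0 :> C.
Proof.
move=> F_ge0 F_prim NAa; have [N0 N0F] := zlin_NA_cofinite genA F_ge0 F_prim.
have nat_val b : inNA A b -> exists n : nat, zlin F b = n.
  by move=> NAb; exists `|zlin F b|%N; rewrite gez0_abs // (zlin_NA_ge0 F_ge0 NAb).
have [fa Fa] := nat_val a NAa.
exists [seq k <- iota 0 (N0 + fa) | k != fa]; split.
  rewrite prodf_seq_neq0; apply/allP => k; rewrite mem_filter Fa => /andP[k_fa _].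
  by rewrite subr_eq0 -[(Posz fa)%:~R]/(fa%:R : C) eqr_nat eq_sym.
move=> c NAc gap; have [fc Fc] := nat_val c NAc.
apply/eqP; rewrite prodf_seq_eq0; apply/hasP; exists fc; last first.
  by rewrite Fc subrr eqxx.
rewrite mem_filter mem_iota /=; apply/andP; split.
  apply: contra_notN gap => /eqP fc_fa; exists 0; split; first exact: inNA0.
  by rewrite raddfB /= Fc Fa fc_fa subrr raddf0.
rewrite add0n ltnNge; apply: contra_notN gap => le_fc.
have N0_le : (N0 <= fc - fa)%N by lia.
have [b NAb Fb] := N0F _ N0_le.
by exists b; split=> //; rewrite Fb raddfB /= Fc Fa; lia.
Qed.

Lemma separating_ffpoly (L : seq zvec) (a : zvec) : inNA A a ->
  (forall F, F \in L -> (forall b, b \in A -> 0 <= zlin F b) /\ exists v, zlin F v = 1) ->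
  exists ls, ffpoly ls a != 0 :> C /\ forall c, inNA A c ->
    (exists2 F, F \in L & ~ in_form_image A F (c - a)) -> ffpoly ls c = 0.
Proof.
move=> NAa; elim: L => [|F L IHL] L_forms.
  have [ls ls1] := @polyfun_const R d 1.
  by exists ls; split=> [|c _ []//]; rewrite -ls1 oner_neq0.
have [F_ge0 F_prim] := L_forms F (mem_head F L).
have [ks [ks_a ks_gap]] := gap_factor F_ge0 F_prim NAa.
have [F' F'L|ls [ls_a ls_gap]] := IHL; first by apply: L_forms; rewrite inE F'L orbT.
have ls_poly : polyfun (ffpoly ls) by exists ls.
have [ls' ls'E] := polyfun_mul_prod F ks ls_poly.
exists ls'; split=> [|c NAc [F' F'L gap]]; rewrite -ls'E; first exact: mulf_neq0.
move: F'L; rewrite inE => /orP[/eqP F'F|F'L]; first by rewrite ks_gap -?F'F ?mulr0.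
by rewrite ls_gap ?mul0r //; exists F'.
Qed.

Lemma scored_separating_ffpoly (a : zvec) : scored R A -> inNA A a ->
  exists ls, ffpoly ls a != 0 :> C /\
    forall c, inNA A c -> ~ inNA A (c - a) -> ffpoly ls c = 0.
Proof.
move=> scA NAa; have [L LE] := facet_forms_finite R genA.
have L_forms F : F \in L -> (forall b, b \in A -> 0 <= zlin F b) /\ exists v, zlin F v = 1.
  by move=> /LE[s _ sF]; split; [exact: facet_form_ge0 sF | exact: sF.2.2].
have [ls [ls_a ls_gap]] := separating_ffpoly NAa L_forms.
exists ls; split=> // c NAc NAca; apply: ls_gap => //.
apply: NNPP => noF; apply/NAca/scA => s sA F sF.
by apply: NNPP => gap; apply: noF; exists F => //; apply/LE; exists s.
Qed.

End Separation.

Section Simplicity.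
Variables (R : realType) (d : nat) (A : seq 'rV[int]_d).
Local Notation zvec := 'rV[int]_d.
Local Notation C := R[i].
Implicit Types (S : zvec -> Prop) (N : (zvec -> C) -> Prop) (f : zvec -> C).

Definition monom (k : C) (b : zvec) : zvec -> C := fun c => if c == b then k else 0.

Lemma laurent_monom k b : laurent (monom k b).
Proof. by exists [:: b] => c; rewrite inE /monom => /negPf->. Qed.

Lemma supported_monom S k b : S b -> supported_in S (monom k b).
Proof. by move=> Sb c; rewrite /monom; case: (c =P b) => [-> //|_]; rewrite eqxx. Qed.

Lemma graded_submodule_spanned S N : graded_submodule A S N ->
  (forall b, S b -> N (monom 1 b)) -> forall f, laurent f -> supported_in S f -> N f.
Proof.
move=> [_ [N0 N_add N_scale _ _]] N_monom f [s sf].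
elim: s f sf => [|x s IHs] f sf f_S.
  by have -> : f = fun=> 0 by apply: functional_extensionality => c; apply: sf.
pose g c := if c == x then 0 else f c.
have Ng : N g.
  apply: IHs => c; rewrite /g; case: (c =P x) => [_|/eqP c_x]; rewrite ?eqxx //.
    by move=> cs; apply: sf; rewrite inE negb_or c_x.
  exact: f_S.
have [fx0|fx_neq0] := eqVneq (f x) 0.
  suff -> : f = g by [].
  by apply: functional_extensionality => c; rewrite /g; case: eqP => // ->.
have := N_add _ _ Ng (N_scale (f x) _ (N_monom x (f_S x fx_neq0))).
congr N; apply: functional_extensionality => c; rewrite /g /monom.
by case: eqP => [->|_]; rewrite ?add0r ?mulr1 ?mulr0 ?addr0.
Qed.

Lemma graded_submodule_shift S N f b : graded_submodule A S N ->
  inNA A b -> N f -> N (fun c => f (c - b)).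
Proof.
move=> [_ [_ _ _ N_act _]] NAb Nf.
have [one one1] := @polyfun_const R d 1.
have one_DRA : inDRA A (shift_op one b).
  by apply: shift_op_DRA => c NAc []; apply: inNAD.
have := N_act _ one_DRA _ Nf; congr N.
by apply: functional_extensionality => c; rewrite dact_shift_op -one1 mul1r.
Qed.

Lemma graded_submodule_monom0 N f a : generates_Zd A -> scored R A ->
  graded_submodule A (inS1 R A) N -> N f -> f a != 0 -> N (monom 1 0).
Proof.
move=> genA scA [N_supp [_ _ N_scale N_act N_proj]] Nf fa_neq0.
have NAa : inNA A a by apply/scA; exact: (N_supp f Nf).2.
have [ls [ls_a ls_gap]] := scored_separating_ffpoly genA scA NAa.
have ls_DRA : inDRA A (shift_op ls (- a)) by exact: shift_op_DRA ls_gap.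
have := N_scale (ffpoly ls a * f a)^-1 _ (N_act _ ls_DRA _ (N_proj f Nf a)).
congr N; apply: functional_extensionality => c; rewrite dact_shift_op opprK /monom.
have [->|c_neq0] := eqVneq c 0; first by rewrite add0r !eqxx mulVf ?mulf_neq0.
by rewrite -subr_eq0 addrK (negPf c_neq0) !mulr0.
Qed.

Lemma scored_simple : generates_Zd A -> scored R A -> C_S1_graded_simple R A.
Proof.
move=> genA scA N N_sub.
have [[f [Nf [a fa_neq0]]]|N0] := classic (exists f, N f /\ exists a, f a != 0); last first.
  left=> f Nf; apply: functional_extensionality => c; apply/eqP/negP => fc_neq0.
  by apply: N0; exists f; split=> //; exists c; apply/negP.
right; apply: (graded_submodule_spanned N_sub) => b /scA NAb.
have -> : monom 1 b = fun c => monom 1 0 (c - b).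
  by apply: functional_extensionality => c; rewrite /monom subr_eq0.
exact: graded_submodule_shift N_sub NAb (graded_submodule_monom0 genA scA N_sub Nf fa_neq0).
Qed.

Lemma inS1_NA v : inNA A v -> inS1 R A v.
Proof. by move=> NAv s _ F _; exists v. Qed.

Lemma NA_graded_submodule :
  graded_submodule A (inS1 R A) (fun f => laurent f /\ supported_in (inNA A) f).
Proof.
split=> [f [fL f_NA]|]; first by split=> // c /f_NA; apply: inS1_NA.
split.
- by split=> [|c]; [exists [::] | rewrite eqxx].
- move=> f g [[s sf] f_NA] [[s' s'g] g_NA]; split.
    by exists (s ++ s') => c; rewrite mem_cat negb_or => /andP[/sf-> /s'g->]; rewrite addr0.
  move=> c; have [fc0|/f_NA //] := eqVneq (f c) 0.
  by rewrite fc0 add0r => /g_NA.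
- move=> k f [[s sf] f_NA]; split; first by exists s => c /sf->; rewrite mulr0.
  by move=> c; rewrite mulf_eq0 negb_or => /andP[_ /f_NA].
- by move=> P P_DRA f [fL f_NA]; apply: P_DRA.
- move=> f [_ f_NA] a; split; first exact: laurent_monom.
  by move=> c; case: (c =P a) => [->|_]; [exact: f_NA | rewrite eqxx].
Qed.

Lemma simple_scored : C_S1_graded_simple R A -> scored R A.
Proof.
move=> simple v; split; first exact: inS1_NA.
move=> S1v; have [N0|Nall] := simple _ NA_graded_submodule.
  have /(congr1 (fun f => f 0)) : monom 1 0 = fun=> 0.
    by apply: N0; split; [exact: laurent_monom | apply: supported_monom; exact: inNA0].
  by rewrite /monom eqxx => /eqP; rewrite oner_eq0.
have [_ NAv] := Nall _ (laurent_monom 1 v) (supported_monom (k := 1) S1v).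
by apply: NAv; rewrite /monom eqxx oner_neq0.
Qed.

End Simplicity.

Theorem proposition8p13 (R : realType) (d : nat) (A : seq 'rV[int]_d) :
  generates_Zd A ->
  (scored R A <-> C_S1_graded_simple R A).
Proof.
move=> genA; split; [exact: scored_simple | exact: simple_scored].
Qed.
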